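(* Let $R$ be a ring, let $N\ge0$ and $0\le n\le N$, and let $\mathfrak{J}$ be a set of subsets of $[0,N]=\{0,1,\dots,N\}$. In $R[X_1,\dots,X_N]$ put $X_0:=1-X_1-\cdots-X_N$. Then \[(X_{n+1},\dots,X_N)+\bigcap_{J\in\mathfrak{J}}(X_i)_{i\in J}=\bigcap_{J\in\mathfrak{J}}\Big((X_i)_{i\in J}+(X_{n+1},\dots,X_N)\Big).\] *)

From HB Require Import structures.
From mathcomp Require Import all_boot all_order all_algebra.
From mathcomp Require Import mpoly.
Set Implicit Arguments. Unset Strict Implicit. Unset Printing Implicit Defensive.
Import GRing.Theory.
Local Open Scope ring_scope.

(* Variables X_0, ..., X_N of R[X_1,...,X_N], indexed by 'I_(N.+1):
   X_0 := 1 - X_1 - ... - X_N, and X_i (i >= 1) is the mpoly variable 'X_(i-1). *)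
Definition bvar (R : comNzRingType) (N : nat) (i : 'I_N.+1) : {mpoly R[N]} :=
  match unlift ord0 i with
  | None => 1 - \sum_(j < N) 'X_j
  | Some j => 'X_j
  end.

Definition ideal_gen (T : comNzRingType) (I : finType) (P : pred I) (g : I -> T)
  : T -> Prop :=
  fun p => exists c : I -> T, p = \sum_(i | P i) c i * g i.

Definition ideal_add (T : comNzRingType) (A B : T -> Prop) : T -> Prop :=
  fun p => exists a b, A a /\ B b /\ p = a + b.

(* Intersection of a family of ideals indexed by a finite set of indices
   (empty intersection = the whole ring). *)
Definition ideal_bigcap (T : comNzRingType) (K : finType) (F : {set K})
  (A : K -> T -> Prop) : T -> Prop :=
  fun p => forall k, k \in F -> A k p.

From HB Require Import structures.
From mathcomp Require Import all_boot all_order all_algebra.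
From mathcomp Require Import mpoly ring.
Set Implicit Arguments. Unset Strict Implicit. Unset Printing Implicit Defensive.
Import GRing.Theory.
Local Open Scope ring_scope.

(* Let T be the tail ideal (X_(n+1), ..., X_N) and S := 1 - X_(n+1) - ... - X_N,
   so that S = 1 mod T and S - X_1 - ... - X_n = X_0.  For a degree bound d let
   Psi_d p (homog_kept d p) be the homogenization of p modulo T: substitute
   X_j t for each kept variable X_j (1 <= j <= n) and 0 for each tail variable,
   then replace t^k by S^(d-k).  Then Psi_d p = p mod T, Psi_d kills T, and
   Psi_(d+1) (c X_i) = X_i Psi_d c for every kept index 0 <= i <= n as soon as
   deg_t c <= d.  Hence if p = sum_(i in J) c_i X_i mod T for every J, with all
   cofactors c_i of t-degree < d, then Psi_(d+1) p lies in every (X_i)_(i in J)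
   and differs from p by an element of T. *)

Section IdealGen.
Variables (T : comNzRingType) (I : finType) (P : pred I) (g : I -> T).
Local Notation G := (ideal_gen P g).

Lemma ideal_gen0 : G 0.
Proof. by exists (fun _ => 0); rewrite big1 // => i _; rewrite mul0r. Qed.

Lemma ideal_genD a b : G a -> G b -> G (a + b).
Proof.
move=> [c ->] [c' ->]; exists (fun i => c i + c' i).
by rewrite -big_split; apply: eq_bigr => i _; rewrite mulrDl.
Qed.

Lemma ideal_genMl r a : G a -> G (r * a).
Proof.
move=> [c ->]; exists (fun i => r * c i).
by rewrite mulr_sumr; apply: eq_bigr => i _; rewrite mulrA.
Qed.

Lemma ideal_genN a : G a -> G (- a).
Proof. by move=> Ga; rewrite -mulN1r; apply: ideal_genMl. Qed.

Lemma mem_ideal_gen i : P i -> G (g i).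
Proof.
move=> Pi; exists (fun k => (k == i)%:R).
rewrite (bigD1 i) //= eqxx mul1r big1 ?addr0 // => k /andP[_ /negbTE->].
by rewrite mul0r.
Qed.

Lemma ideal_gen_sum (J : Type) (r : seq J) (Q : pred J) (F : J -> T) :
  (forall j, Q j -> G (F j)) -> G (\sum_(j <- r | Q j) F j).
Proof. by move=> GF; apply: big_ind => //; [exact: ideal_gen0 | exact: ideal_genD]. Qed.

Lemma ideal_gen_subrX1 s m : G (s - 1) -> G (s ^+ m - 1).
Proof. by move=> Gs; rewrite -(expr1n T m) subrXX mulrC; apply: ideal_genMl. Qed.

End IdealGen.

Lemma mpoly_rmorph_eqmod (R : comNzRingType) (n : nat) (I : finType) (P : pred I)
    (g : I -> {mpoly R[n]}) (f : {rmorphism {mpoly R[n]} -> {mpoly R[n]}}) :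
    (forall c, f c%:MP = c%:MP) -> (forall j, ideal_gen P g (f 'X_j - 'X_j)) ->
  forall p, ideal_gen P g (f p - p).
Proof.
move=> fC fX; pose E p := ideal_gen P g (f p - p).
have E1 : E 1 by rewrite /E rmorph1 subrr; apply: ideal_gen0.
have EM p q : E p -> E q -> E (p * q).
  move=> Ep Eq; rewrite /E rmorphM.
  have -> : f p * f q - p * q = f p * (f q - q) + q * (f p - p) by ring.
  by apply: ideal_genD; apply: ideal_genMl.
have EX i k : E ('X_i ^+ k).
  by elim: k => [|k IHk]; rewrite ?expr0 // exprS; apply: EM => //; apply: fX.
have EC c : E c%:MP by rewrite /E fC subrr; apply: ideal_gen0.
have EXm m : E 'X_[m].
  by rewrite mpolyXE_id; apply: (big_ind E) => // i _; apply: EX.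
elim/mpolyind=> [|c m p _ _ Ep]; first by rewrite rmorph0 subrr; apply: ideal_gen0.
rewrite rmorphD opprD addrACA; apply: ideal_genD => //.
by rewrite -mul_mpolyC; apply: (EM _ _ (EC c) (EXm m)).
Qed.

Section Homogenize.
Variables (A : comNzRingType) (s : A).

Definition homogenize (d : nat) (q : {poly A}) : A :=
  \sum_(k < d.+1) q`_k * s ^+ (d - k).

Lemma homogenize_is_zmod_morphism d : zmod_morphism (homogenize d).
Proof.
by move=> p q; rewrite /homogenize -sumrB; apply: eq_bigr => k _; rewrite coefB mulrBl.
Qed.

HB.instance Definition _ d :=
  GRing.isZmodMorphism.Build {poly A} A (homogenize d) (homogenize_is_zmod_morphism d).

Lemma homogenizeCl d a q : homogenize d (a%:P * q) = a * homogenize d q.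
Proof. by rewrite /homogenize mulr_sumr; apply: eq_bigr => k _; rewrite coefCM mulrA. Qed.

Lemma homogenizeMX d q : homogenize d.+1 (q * 'X) = homogenize d q.
Proof.
rewrite /homogenize big_ord_recl coefMX mul0r add0r.
by apply: eq_bigr => k _; rewrite coefMX.
Qed.

Lemma homogenizeS d (q : {poly A}) :
  (size q <= d.+1)%N -> homogenize d.+1 q = s * homogenize d q.
Proof.
move=> sq; rewrite /homogenize big_ord_recr /= [q`_d.+1]nth_default // mul0r addr0.
rewrite mulr_sumr; apply: eq_bigr => k _; rewrite subSn; last by rewrite -ltnS.
by rewrite exprS mulrCA.
Qed.

Lemma homogenizeM_linear d (q : {poly A}) a b : (size q <= d.+1)%N ->
  homogenize d.+1 (q * (b%:P + a%:P * 'X)) = (b * s + a) * homogenize d q.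
Proof.
move=> sq; rewrite mulrDr raddfD /= mulrA homogenizeMX.
by rewrite [q * b%:P]mulrC [q * a%:P]mulrC !homogenizeCl homogenizeS // mulrA -mulrDl.
Qed.

Lemma homogenize_eqmod_horner1 (I : finType) (P : pred I) (g : I -> A) d
    (q : {poly A}) :
    ideal_gen P g (s - 1) -> (size q <= d.+1)%N ->
  ideal_gen P g (homogenize d q - q.[1]).
Proof.
move=> Gs sq; rewrite (horner_coef_wide _ sq) /homogenize -sumrB.
apply: ideal_gen_sum => k _; rewrite expr1n -mulrBr.
by apply: ideal_genMl; apply: ideal_gen_subrX1.
Qed.

End Homogenize.

Section TailHomogenization.
Variables (R : comNzRingType) (N n : nat).
Local Notation A := {mpoly R[N]}.
Local Notation tail_ideal := (ideal_gen (fun i : 'I_N.+1 => (n < i)%N) (@bvar R N)).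

Definition one_sub_tail : A := 1 - \sum_(j < N | (n <= j)%N) 'X_j.

Definition grade_kept : {rmorphism A -> {poly A}} :=
  mmap ((polyC \o @mpolyC N R)%FUN : {rmorphism R -> {poly A}})
       (fun j => if (j < n)%N then ('X_j)%:P * 'X else 0).

Definition homog_kept d : {additive A -> A} :=
  (homogenize one_sub_tail d \o grade_kept)%FUN.

Lemma grade_keptC c : grade_kept c%:MP = (c%:MP)%:P.
Proof. exact: mmapC. Qed.

Lemma grade_keptX j : grade_kept 'X_j = if (j < n)%N then ('X_j)%:P * 'X else 0.
Proof. by rewrite /grade_kept /= mmapX mmap1U. Qed.

Lemma bvar_lift (j : 'I_N) : bvar R (lift ord0 j) = 'X_j.
Proof. by rewrite /bvar liftK. Qed.

Lemma bvar0 : bvar R ord0 = 1 - \sum_(j < N) 'X_j.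
Proof. by rewrite /bvar unlift_none. Qed.

Lemma tail_ideal_X (j : 'I_N) : (n <= j)%N -> tail_ideal 'X_j.
Proof. by move=> nj; rewrite -bvar_lift; apply: mem_ideal_gen; rewrite lift0 ltnS. Qed.

Lemma one_sub_tail_eqmod1 : tail_ideal (one_sub_tail - 1).
Proof.
rewrite /one_sub_tail addrAC subrr add0r; apply/ideal_genN/ideal_gen_sum.
exact: tail_ideal_X.
Qed.

Lemma grade_kept_bvar_tail (i : 'I_N.+1) : (n < i)%N -> grade_kept (bvar R i) = 0.
Proof.
case: (unliftP ord0 i) => [j ->|->] //; rewrite lift0 ltnS bvar_lift grade_keptX.
by rewrite ltnNge => ->.
Qed.

(* For X_0 this is the identity S - (X_1 + ... + X_n) = X_0. *)
Lemma grade_kept_bvar_kept (i : 'I_N.+1) : ~~ (n < i)%N ->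
  exists b a, grade_kept (bvar R i) = b%:P + a%:P * 'X /\ b * one_sub_tail + a = bvar R i.
Proof.
case: (unliftP ord0 i) => [j ->|->] ni.
  have jn : (j < n)%N by rewrite -ltnNge lift0 ltnS in ni.
  by exists 0, 'X_j; rewrite bvar_lift grade_keptX jn mul0r !add0r.
exists 1, (- \sum_(j < N | (j < n)%N) 'X_j); rewrite bvar0; split.
  rewrite rmorphB rmorph1 polyC1 polyCN mulNr rmorph_sum; congr (_ - _).
  rewrite (bigID (fun j : 'I_N => (j < n)%N)) /= [X in _ + X]big1 => [|j]; last first.
    by rewrite grade_keptX => /negbTE->.
  by rewrite addr0 raddf_sum mulr_suml; apply: eq_bigr => j; rewrite grade_keptX => ->.
rewrite mul1r /one_sub_tail [in RHS](bigID (fun j : 'I_N => (j < n)%N)) /=.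
under [X in _ = _ - (_ + X)]eq_bigl do rewrite -leqNgt.
by rewrite (addrC (\sum_(j < N | (j < n)%N) 'X_j)) opprD addrA.
Qed.

Lemma homog_kept_eqmod d p :
  (size (grade_kept p) <= d.+1)%N -> tail_ideal (homog_kept d p - p).
Proof.
move=> sp; pose eval1 : {rmorphism A -> A} := (horner_eval 1 \o grade_kept)%FUN.
have -> : homog_kept d p - p = (homog_kept d p - eval1 p) + (eval1 p - p).
  by rewrite addrA subrK.
apply: ideal_genD; first exact: homogenize_eqmod_horner1 one_sub_tail_eqmod1 sp.
apply: mpoly_rmorph_eqmod => [c|j]; first by rewrite /= horner_evalE grade_keptC hornerC.
rewrite /= horner_evalE grade_keptX; case: ifP => [_|/negbT].
  by rewrite hornerMX hornerC mulr1 subrr; apply: ideal_gen0.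
by rewrite horner0 sub0r -leqNgt => nj; apply/ideal_genN/tail_ideal_X.
Qed.

Lemma homog_kept_tail d q : tail_ideal q -> homog_kept d q = 0.
Proof.
move=> [c ->]; rewrite raddf_sum big1 // => i ni.
by rewrite /= rmorphM grade_kept_bvar_tail // mulr0 raddf0.
Qed.

Lemma homog_kept_mul_kept d c (i : 'I_N.+1) : ~~ (n < i)%N ->
    (size (grade_kept c) <= d.+1)%N ->
  homog_kept d.+1 (c * bvar R i) = bvar R i * homog_kept d c.
Proof.
move=> ni sc; have [b [a [grade_bvar bvarE]]] := grade_kept_bvar_kept ni.
by rewrite /= rmorphM grade_bvar homogenizeM_linear // bvarE.
Qed.

Lemma homog_kept_mem_ideal (J : {set 'I_N.+1}) D (C : 'I_N.+1 -> A) p :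
    (forall i, (size (grade_kept (C i)) <= D)%N) ->
    tail_ideal (p - \sum_(i in J) C i * bvar R i) ->
  ideal_gen (fun i => i \in J) (@bvar R N) (homog_kept D.+1 p).
Proof.
move=> sC /(homog_kept_tail D.+1).
rewrite raddfB (raddf_sum (homog_kept D.+1)) => /subr0_eq->.
exists (fun i : 'I_N.+1 => if (n < i)%N then 0 else homog_kept D (C i)).
apply: eq_bigr => i _.
case: ifP => [ni|/negbT ni].
  by rewrite mul0r; apply/homog_kept_tail/ideal_genMl/mem_ideal_gen.
by rewrite [RHS]mulrC homog_kept_mul_kept //; apply: leqW.
Qed.

End TailHomogenization.

Arguments grade_kept {R N} n.
Arguments homog_kept {R N} n d.

Theorem lemma2p30 (R : comNzRingType) (N n : nat) (hn : (n <= N)%N)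
  (JJ : {set {set 'I_N.+1}}) :
  let Xtail := ideal_gen (fun i : 'I_N.+1 => (n < i)%N) (@bvar R N) in
  let XJ := fun J : {set 'I_N.+1} => ideal_gen (fun i => i \in J) (@bvar R N) in
  forall p : {mpoly R[N]},
    ideal_add Xtail (ideal_bigcap JJ XJ) p <->
    ideal_bigcap JJ (fun J => ideal_add (XJ J) Xtail) p.
Proof.
move=> Xtail XJ p; split.
  move=> [a [b [Ta [Jb ->]]]] J JJ_J.
  by exists b, a; rewrite addrC; split => //; apply: Jb.
move=> Hp.
have /fin_all_exists [C HC] : forall J : {set 'I_N.+1},
    exists C : 'I_N.+1 -> {mpoly R[N]},
      J \in JJ -> Xtail (p - \sum_(i in J) C i * bvar R i).
  move=> J; have [JJ_J|] := boolP (J \in JJ); last by exists (fun _ => 0).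
  have [_ [b [[C ->] [Tb ->]]]] := Hp J JJ_J.
  by exists C => _; rewrite [_ + b]addrC addrK.
pose D := maxn (size (grade_kept n p)) (\max_J \max_i size (grade_kept n (C J i))).
have sC J i : (size (grade_kept n (C J i)) <= D)%N.
  apply: leq_trans (leq_maxr _ _); apply: leq_trans (leq_bigmax J).
  exact: (leq_bigmax i).
exists (p - homog_kept n D.+1 p), (homog_kept n D.+1 p); split; [|split].
- rewrite -opprB; apply/ideal_genN/homog_kept_eqmod.
  by rewrite 2?leqW // leq_maxl.
- by move=> J JJ_J; apply: homog_kept_mem_ideal (sC J) (HC J JJ_J).
- by rewrite subrK.
Qed.
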